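(* Let $f\in\mathrm{Homeo}_+(\mathbb{R})$ satisfy $f(x+1)=f(x)+2$ for all $x\in\mathbb{R}$ and $f(0)=0$. For $r=p/2^q$ with $p,q\in\mathbb{Z}$ define $\bar r=f^{-q}(T_p(f^q(0)))$, where $T_p(x)=x+p$. Then the map $r\mapsto\bar r$ from $\mathbb{Q}_2$ to $\mathbb{R}$ is well defined (independent of the representation $r=p/2^q$), strictly increasing, fixes every integer, and satisfies $\overline{r+1}=\bar r+1$ for all $r\in\mathbb{Q}_2$.
   Context: $\mathbb{Q}_2=\{p/2^q:p,q\in\mathbb{Z}\}$ denotes the dyadic rationals; $\mathrm{Homeo}_+(\mathbb{R})$ is the group of increasing self-homeomorphisms of $\mathbb{R}$. *)

From Stdlib Require Import Reals ZArith.
Open Scope R_scope.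

Definition homeo_plus (f g : R -> R) : Prop :=
  (forall x, g (f x) = x) /\ (forall x, f (g x) = x) /\
  continuity f /\ continuity g /\
  (forall x y, x < y -> f x < f y).

Definition iterZ (f g : R -> R) (z : Z) (x : R) : R :=
  match z with
  | Z0 => x
  | Zpos n => Nat.iter (Pos.to_nat n) f x
  | Zneg n => Nat.iter (Pos.to_nat n) g x
  end.

Definition dyad (p q : Z) : R := IZR p / powerRZ 2 q.

Definition bar (f g : R -> R) (p q : Z) : R :=
  iterZ f g (- q) (iterZ f g q 0 + IZR p).

(* Over dyadics with denominator 2^N for a fixed N >= q, [bar] is the single map
   m / 2^N |-> g^N(m): the relation f(x + 1) = f x + 2 makes f^q send integers
   to integers (scaled by 2^q) and makes g^N translate by 1 when its argument is
   translated by 2^N.  Well-definedness, the action on integers and the shift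
   by 1 are then identities between numerators, and monotonicity is that of g^N. *)
From Stdlib Require Import Reals ZArith Lra Lia.
Open Scope R_scope.

Lemma IZR_pow2 (k : nat) : IZR (2 ^ Z.of_nat k) = 2 ^ k.
Proof. now rewrite <- pow_IZR. Qed.

Lemma iter_fixpoint (h : R -> R) (x : R) : h x = x -> forall n, Nat.iter n h x = x.
Proof. intros Hx n; induction n as [|n IHn]; simpl; [reflexivity | rewrite IHn; exact Hx]. Qed.

(* The numerator of p / 2^q over the denominator 2^N (meaningful only for q <= N). *)
Definition numer_at (N : nat) (p q : Z) : Z := (p * 2 ^ (Z.of_nat N - q))%Z.

Lemma dyad_numer_at p q (N : nat) : (q <= Z.of_nat N)%Z ->
  dyad p q = IZR (numer_at N p q) / 2 ^ N.
Proof.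
  intros HN; unfold dyad, numer_at.
  assert (E : (Z.of_nat N - q)%Z = Z.of_nat (Z.to_nat (Z.of_nat N - q))) by lia.
  rewrite E, mult_IZR, IZR_pow2, pow_powerRZ, <- E.
  unfold Z.sub; rewrite powerRZ_add, powerRZ_neg', pow_powerRZ by lra.
  assert (powerRZ 2 q <> 0) by (apply powerRZ_NOR; lra).
  assert (powerRZ 2 (Z.of_nat N) <> 0) by (apply powerRZ_NOR; lra).
  field; auto.
Qed.

Section DegreeTwoLift.

Variables f g : R -> R.
Hypothesis homeo_fg : homeo_plus f g.
Hypothesis f_add1 : forall x, f (x + 1) = f x + 2.
Hypothesis f0 : f 0 = 0.

Lemma f_addn (n : nat) x : f (x + INR n) = f x + 2 * INR n.
Proof.
  induction n as [|n IHn].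
  - simpl; rewrite Rplus_0_r; ring.
  - rewrite S_INR, <- Rplus_assoc, f_add1, IHn; ring.
Qed.

Lemma f_addz (n : Z) x : f (x + IZR n) = f x + 2 * IZR n.
Proof.
  destruct (Z.le_gt_cases 0 n) as [Hn | Hn].
  - rewrite <- (Z2Nat.id n Hn), <- INR_IZR_INZ; apply f_addn.
  - replace n with (- Z.of_nat (Z.to_nat (- n)))%Z by lia.
    rewrite opp_IZR, <- INR_IZR_INZ.
    pose proof (f_addn (Z.to_nat (- n)) (x + - INR (Z.to_nat (- n)))) as K.
    rewrite Rplus_assoc, Rplus_opp_l, Rplus_0_r in K; lra.
Qed.

Lemma g_add2z (m : Z) x : g (x + 2 * IZR m) = g x + IZR m.
Proof.
  destruct homeo_fg as [gf [fg _]].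
  rewrite <- (gf (g x + IZR m)), f_addz, fg; reflexivity.
Qed.

Lemma iter_g_add k (m : Z) x :
  Nat.iter k g (x + 2 ^ k * IZR m) = Nat.iter k g x + IZR m.
Proof.
  revert m x; induction k as [|k IHk]; intros m x; [simpl; ring |].
  replace (x + 2 ^ S k * IZR m) with (x + 2 ^ k * IZR (2 * m))
    by (rewrite mult_IZR; simpl; ring).
  rewrite !Nat.iter_succ, IHk, mult_IZR; apply g_add2z.
Qed.

Lemma g0 : g 0 = 0.
Proof. destruct homeo_fg as [gf _]; rewrite <- f0 at 1; apply gf. Qed.

Lemma iter_g_pow2 k (m : Z) : Nat.iter k g (IZR (m * 2 ^ Z.of_nat k)) = IZR m.
Proof.
  rewrite mult_IZR, IZR_pow2, Rmult_comm, <- (Rplus_0_l (2 ^ k * _)), iter_g_add.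
  rewrite iter_fixpoint by exact g0; ring.
Qed.

Lemma iter_f_int k (p : Z) : Nat.iter k f (IZR p) = IZR (p * 2 ^ Z.of_nat k).
Proof.
  revert p; induction k as [|k IHk]; intros p; [simpl; f_equal; lia |].
  rewrite Nat.iter_succ, IHk, <- (Rplus_0_l (IZR (p * _))), f_addz, f0.
  rewrite Nat2Z.inj_succ, Z.pow_succ_r, !mult_IZR by lia; ring.
Qed.

Lemma g_lt x y : x < y -> g x < g y.
Proof.
  destruct homeo_fg as [_ [fg [_ [_ f_lt]]]]; intros Hxy.
  destruct (Rlt_le_dec (g x) (g y)) as [| [Hlt | Heq]%Rle_lt_or_eq_dec];
    [assumption | apply f_lt in Hlt | apply (f_equal f) in Heq]; rewrite !fg in *; lra.
Qed.

Lemma iter_g_lt k x y : x < y -> Nat.iter k g x < Nat.iter k g y.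
Proof.
  intros Hxy; induction k as [|k IHk]; [exact Hxy |].
  rewrite !Nat.iter_succ; exact (g_lt _ _ IHk).
Qed.

Lemma bar_numer_at p q (N : nat) : (q <= Z.of_nat N)%Z ->
  bar f g p q = Nat.iter N g (IZR (numer_at N p q)).
Proof.
  intros HN; unfold bar, numer_at.
  destruct q as [|n|n]; simpl iterZ.
  - rewrite Rplus_0_l, Z.sub_0_r, iter_g_pow2; reflexivity.
  - rewrite (iter_fixpoint f 0 f0), Rplus_0_l.
    replace (Z.of_nat N - Z.pos n)%Z with (Z.of_nat (N - Pos.to_nat n)) by lia.
    replace (Nat.iter N g) with (Nat.iter (Pos.to_nat n + (N - Pos.to_nat n)) g)
      by (f_equal; lia).
    rewrite Nat.iter_add, iter_g_pow2; reflexivity.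
  - rewrite (iter_fixpoint g 0 g0), Rplus_0_l, iter_f_int.
    replace (p * 2 ^ (Z.of_nat N - Z.neg n))%Z
      with (p * 2 ^ Z.of_nat (Pos.to_nat n) * 2 ^ Z.of_nat N)%Z
      by (rewrite <- Z.mul_assoc, <- Z.pow_add_r by lia; do 2 f_equal; lia).
    rewrite iter_g_pow2; reflexivity.
Qed.

Lemma common_level p q p' q' : exists (N : nat) (a a' : Z),
  dyad p q = IZR a / 2 ^ N /\ dyad p' q' = IZR a' / 2 ^ N /\
  bar f g p q = Nat.iter N g (IZR a) /\ bar f g p' q' = Nat.iter N g (IZR a').
Proof.
  set (N := Z.to_nat (Z.max 0 (Z.max q q'))).
  assert (Hq : (q <= Z.of_nat N)%Z) by lia.
  assert (Hq' : (q' <= Z.of_nat N)%Z) by lia.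
  exists N, (numer_at N p q), (numer_at N p' q').
  rewrite (dyad_numer_at p q N Hq), (dyad_numer_at p' q' N Hq'),
    (bar_numer_at p q N Hq), (bar_numer_at p' q' N Hq'); repeat split.
Qed.

Lemma bar_eq p q p' q' : dyad p q = dyad p' q' -> bar f g p q = bar f g p' q'.
Proof.
  destruct (common_level p q p' q') as (N & a & a' & -> & -> & -> & ->).
  pose proof (pow_lt 2 N) as Hpos.
  intros E; apply Rmult_eq_reg_r in E; [now rewrite E | apply Rinv_neq_0_compat; lra].
Qed.

Lemma bar_lt p q p' q' : dyad p q < dyad p' q' -> bar f g p q < bar f g p' q'.
Proof.
  destruct (common_level p q p' q') as (N & a & a' & -> & -> & -> & ->).
  pose proof (pow_lt 2 N) as Hpos.
  intros E; apply iter_g_lt, (Rmult_lt_reg_r (/ 2 ^ N)); [|exact E].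
  apply Rinv_0_lt_compat; lra.
Qed.

Lemma bar_int p q (n : Z) : dyad p q = IZR n -> bar f g p q = IZR n.
Proof.
  destruct (common_level p q p q) as (N & a & _ & -> & _ & -> & _).
  pose proof (pow_lt 2 N) as Hpos.
  intros E; rewrite <- (iter_g_pow2 N n); f_equal.
  rewrite mult_IZR, IZR_pow2, <- E; field; lra.
Qed.

Lemma bar_add1 p q p' q' :
  dyad p' q' = dyad p q + 1 -> bar f g p' q' = bar f g p q + 1.
Proof.
  destruct (common_level p q p' q') as (N & a & a' & -> & -> & -> & ->).
  pose proof (pow_lt 2 N) as Hpos.
  intros E; rewrite <- iter_g_add; f_equal.
  apply (Rmult_eq_reg_r (/ 2 ^ N)); [|apply Rinv_neq_0_compat; lra].
  unfold Rdiv in E; rewrite E; field; lra.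
Qed.

End DegreeTwoLift.

Theorem mainTheorem3 (f g : R -> R) :
  homeo_plus f g ->
  (forall x, f (x + 1) = f x + 2) ->
  f 0 = 0 ->
  (forall p q p' q' : Z, dyad p q = dyad p' q' -> bar f g p q = bar f g p' q') /\
  (forall p q p' q' : Z, dyad p q < dyad p' q' -> bar f g p q < bar f g p' q') /\
  (forall (p q n : Z), dyad p q = IZR n -> bar f g p q = IZR n) /\
  (forall p q p' q' : Z, dyad p' q' = dyad p q + 1 -> bar f g p' q' = bar f g p q + 1).
Proof.
  intros homeo_fg f_add1 f0.
  split; [|split; [|split]].
  - exact (bar_eq f g homeo_fg f_add1 f0).
  - exact (bar_lt f g homeo_fg f_add1 f0).
  - exact (bar_int f g homeo_fg f_add1 f0).
  - exact (bar_add1 f g homeo_fg f_add1 f0).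
Qed.
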